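(* Let $\mathbb{C}$ and $\mathbb{I}$ be categories. Every parameterised monad on $\mathbb{C}$ indexed by $\mathbb{I}$ is a category-graded monad on $\mathbb{C}$ with a generalised unit; that is, there is an injective assignment sending each parameterised monad $(\mathsf{P}:\mathbb{I}^{\mathsf{op}}\times\mathbb{I}\to[\mathbb{C},\mathbb{C}],\mu^{\mathsf{P}},\eta^{\mathsf{P}})$ to a category-graded monad on $\mathbb{C}$ equipped with a generalised unit.
   Context: A parameterised monad on $\mathbb{C}$ indexed by $\mathbb{I}$ is a functor $\mathsf{P}:\mathbb{I}^{\mathsf{op}}\times\mathbb{I}\to[\mathbb{C},\mathbb{C}]$ with natural transformations $\eta^{\mathsf{P}}_I:\mathsf{Id}\to\mathsf{P}(I,I)$ and $\mu^{\mathsf{P}}_{I,J,K}:\mathsf{P}(I,J)\mathsf{P}(J,K)\to\mathsf{P}(I,K)$ satisfying the unit laws $\mu^{\mathsf{P}}_{I,I,J}\circ\eta^{\mathsf{P}}_I\mathsf{P}(I,J)=\mathrm{id}=\mu^{\mathsf{P}}_{I,J,J}\circ\mathsf{P}(I,J)\eta^{\mathsf{P}}_J$ and associativity $\mu^{\mathsf{P}}_{I,K,L}\circ\mu^{\mathsf{P}}_{I,J,K}\mathsf{P}(K,L)=\mu^{\mathsf{P}}_{I,J,L}\circ\mathsf{P}(I,J)\mu^{\mathsf{P}}_{J,K,L}$, with $\eta^{\mathsf{P}}$ dinatural in $I$ (i.e. $\mathsf{P}(I,f)\circ\eta^{\mathsf{P}}_I=\mathsf{P}(f,J)\circ\eta^{\mathsf{P}}_J$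 for $f:I\to J$) and $\mu^{\mathsf{P}}_{I,J,K}$ natural in $I,K$ and dinatural in $J$ (i.e. $\mu^{\mathsf{P}}_{I,J',K}\circ\mathsf{P}(I,g)\mathsf{P}(J',K)=\mu^{\mathsf{P}}_{I,J,K}\circ\mathsf{P}(I,J)\mathsf{P}(g,K)$ for $g:J\to J'$). A category-graded monad on $\mathbb{C}$ graded by a category $\mathbb{K}$ consists of endofunctors $\mathsf{T}_f$ for morphisms $f:I\to J$ of $\mathbb{K}$, natural transformations $\eta_I:\mathsf{Id}\to\mathsf{T}_{id_I}$ and $\mu_{f,g}:\mathsf{T}_f\mathsf{T}_g\to\mathsf{T}_{g\circ f}$ ($f:I\to J$, $g:J\to K$) with $\mu_{id_J,f}\circ\eta_J\mathsf{T}_f=\mathrm{id}_{\mathsf{T}_f}=\mu_{f,id_I}\circ\mathsf{T}_f\eta_I$ and $\mu_{g\circ f,h}\circ\mu_{f,g}\mathsf{T}_h=\mu_{f,h\circ g}\circ\mathsf{T}_f\mu_{g,h}$. A generalised unit for such a category-graded monad consists of a wide subcategory $\mathbb{S}\subseteq\mathbb{K}$ (same objects as $\mathbb{K}$) and natural transformations $\bar\eta_f:\mathsf{Id}\to\mathsf{T}_f$ for every morphism $f$ of $\mathbb{S}$, such that $\mu_{f,g}\circ\mathsf{T}_f\bar\eta_g\circ\bar\eta_f=\bar\eta_{g\circ f}$ for composable $f,g$ in $\mathbb{S}$ and $\bar\eta_{id_I}=\eta_I$ for every object $I$ (equivalently, a right lax natural transformation from the identity category-graded monad to $\mathsf{T}$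 restricted to $\mathbb{S}$, with identity component functors). *)

Record Category := {
  ob :> Type;
  hom : ob -> ob -> Type;
  idm : forall a, hom a a;
  comp : forall a b c, hom b c -> hom a b -> hom a c;
  comp_id_l : forall a b (f : hom a b), comp a b b (idm b) f = f;
  comp_id_r : forall a b (f : hom a b), comp a a b f (idm a) = f;
  comp_assoc : forall a b c d (f : hom a b) (g : hom b c) (h : hom c d),
      comp a c d h (comp a b c g f) = comp a b d (comp b c d h g) f
}.
Arguments hom {_} _ _.
Arguments idm {_} _.
Arguments comp {_ _ _ _} _ _.
Arguments comp_id_l {_ _ _} _.
Arguments comp_id_r {_ _ _} _.
Arguments comp_assoc {_ _ _ _ _} _ _ _.

Record Functor (C D : Category) := {
  fobj :> ob C -> ob D;
  fmap : forall a b : C, hom a b -> hom (fobj a) (fobj b);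
  fmap_id : forall a : C, fmap a a (idm a) = idm (fobj a);
  fmap_comp : forall (a b c : C) (f : hom a b) (g : hom b c),
      fmap a c (comp g f) = comp (fmap b c g) (fmap a b f)
}.
Arguments fobj {_ _} _ _.
Arguments fmap {_ _} _ {_ _} _.

Record NatTrans {C D : Category} (F G : Functor C D) := {
  component :> forall a : C, hom (F a) (G a);
  naturality : forall (a b : C) (f : hom a b),
      comp (fmap G f) (component a) = comp (component b) (fmap F f)
}.
Arguments component {_ _ _ _} _ _.

Definition Fid (C : Category) : Functor C C.
Proof.
  refine {| fobj := fun a => a; fmap := fun a b f => f |}; reflexivity.
Defined.

Definition Fcomp {C D E : Category} (F : Functor D E) (G : Functor C D) : Functor C E.
Proof.
  refine {| fobj := fun a => F (G a); fmap := fun a b f => fmap F (fmap G f) |}.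
  - intros a. rewrite fmap_id. apply fmap_id.
  - intros a b c f g. rewrite fmap_comp. apply fmap_comp.
Defined.

(** The functor P : I^op x I -> [C,C] is written out: its object part [PF],
    its action [Pmap f g = P(f,g)] on a morphism (f,g) : (A,B) -> (A',B') of
    I^op x I (i.e. f : A' -> A and g : B -> B' in I), and functoriality
    (equalities of natural transformations stated componentwise). *)
Record ParamMonad (C I : Category) := {
  PF : ob I -> ob I -> Functor C C;
  Pmap : forall (A A' B B' : I), hom A' A -> hom B B' -> NatTrans (PF A B) (PF A' B');
  Pmap_id : forall (A B : I) (X : C), Pmap A A B B (idm A) (idm B) X = idm (PF A B X);
  Pmap_comp : forall (A A' A'' B B' B'' : I) (f : hom A' A) (f' : hom A'' A')
                     (g : hom B B') (g' : hom B' B'') (X : C),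
      Pmap A A'' B B'' (comp f f') (comp g' g) X
      = comp (Pmap A' A'' B' B'' f' g' X) (Pmap A A' B B' f g X);
  peta : forall A : I, NatTrans (Fid C) (PF A A);
  pmu : forall A B K : I, NatTrans (Fcomp (PF A B) (PF B K)) (PF A K);
  pmu_unit_l : forall (A B : I) (X : C),
      comp (pmu A A B X) (peta A (PF A B X)) = idm (PF A B X);
  pmu_unit_r : forall (A B : I) (X : C),
      comp (pmu A B B X) (fmap (PF A B) (peta B X)) = idm (PF A B X);
  pmu_assoc : forall (A B K L : I) (X : C),
      comp (pmu A K L X) (pmu A B K (PF K L X))
      = comp (pmu A B L X) (fmap (PF A B) (pmu B K L X));
  peta_dinat : forall (A B : I) (f : hom A B) (X : C),
      comp (Pmap A A A B (idm A) f X) (peta A X)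
      = comp (Pmap B A B B f (idm B) X) (peta B X);
  pmu_nat_l : forall (A A' B K : I) (f : hom A' A) (X : C),
      comp (Pmap A A' K K f (idm K) X) (pmu A B K X)
      = comp (pmu A' B K X) (Pmap A A' B B f (idm B) (PF B K X));
  pmu_nat_r : forall (A B K K' : I) (h : hom K K') (X : C),
      comp (Pmap A A K K' (idm A) h X) (pmu A B K X)
      = comp (pmu A B K' X) (fmap (PF A B) (Pmap B B K K' (idm B) h X));
  pmu_dinat : forall (A J J' K : I) (g : hom J J') (X : C),
      comp (pmu A J' K X) (Pmap A A J J' (idm A) g (PF J' K X))
      = comp (pmu A J K X) (fmap (PF A J) (Pmap J' J K K g (idm K) X))
}.

(** Transport of a morphism T_h X -> T_h' X along an equality h = h' of grades
    (needed because the laws of a category-graded monad hold only up to the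
    propositional category laws of the grading category). *)
Definition tcast {C K : Category} (T : forall a b : K, hom a b -> Functor C C)
  {a b : K} {h h' : hom a b} (e : h = h') (X : C) : hom (T a b h X) (T a b h' X) :=
  match e in _ = h'' return hom (T a b h X) (T a b h'' X) with
  | eq_refl => idm _
  end.

Record GradedMonad (C K : Category) := {
  T : forall a b : K, hom a b -> Functor C C;
  geta : forall a : K, NatTrans (Fid C) (T a a (idm a));
  gmu : forall (a b c : K) (f : hom a b) (g : hom b c),
      NatTrans (Fcomp (T a b f) (T b c g)) (T a c (comp g f));
  gunit_l : forall (a b : K) (f : hom a b) (X : C),
      comp (gmu a a b (idm a) f X) (geta a (T a b f X))
      = tcast T (eq_sym (comp_id_r f)) X;
  gunit_r : forall (a b : K) (f : hom a b) (X : C),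
      comp (gmu a b b f (idm b) X) (fmap (T a b f) (geta b X))
      = tcast T (eq_sym (comp_id_l f)) X;
  gassoc : forall (a b c d : K) (f : hom a b) (g : hom b c) (h : hom c d) (X : C),
      comp (tcast T (comp_assoc f g h) X)
           (comp (gmu a c d (comp g f) h X) (gmu a b c f g (T c d h X)))
      = comp (gmu a b d f (comp h g) X) (fmap (T a b f) (gmu b c d g h X))
}.
Arguments T {_ _} _ {_ _} _.
Arguments geta {_ _} _ _.
Arguments gmu {_ _} _ {_ _ _} _ _.

Record WideSubcat (K : Category) := {
  inS : forall a b : K, hom a b -> Prop;
  inS_id : forall a : K, inS a a (idm a);
  inS_comp : forall (a b c : K) (f : hom a b) (g : hom b c),
      inS a b f -> inS b c g -> inS a c (comp g f)
}.
Arguments inS {_} _ {_ _} _.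
Arguments inS_id {_} _ _.
Arguments inS_comp {_} _ {_ _ _ _ _} _ _.

Record GenUnit {C K : Category} (M : GradedMonad C K) (S : WideSubcat K) := {
  ebar : forall (a b : K) (f : hom a b), inS S f -> NatTrans (Fid C) (T M f);
  ebar_comp : forall (a b c : K) (f : hom a b) (g : hom b c)
                     (hf : inS S f) (hg : inS S g) (X : C),
      comp (gmu M f g X) (comp (fmap (T M f) (ebar b c g hg X)) (ebar a b f hf X))
      = ebar a c (comp g f) (inS_comp S hf hg) X;
  ebar_id : forall (a : K) (X : C), ebar a a (idm a) (inS_id S a) X = geta M a X
}.

(* Grade by I with an absorbing zero morphism adjoined to every hom-set, and
   put T_h := P(a,b) for every grade h : a -> b, with the unit and
   multiplication of P; since T ignores the grade, the graded monad laws are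
   the parameterised ones.  On the genuine morphisms the generalised unit is
   ebar_f := P(id,f) o eta, whose law follows from the dinaturality of mu and
   eta.  The assignment is injective because P(a,b), eta and mu are read off
   directly, while the action of P on morphisms is recovered as
   P(f,g) = (mu o P(ebar_g)) o (mu o ebar_f). *)

From Stdlib Require Import ssreflect FunctionalExtensionality ProofIrrelevance Eqdep.

Arguments PF {C I} _ _ _.
Arguments Pmap {C I} _ {A A' B B'} _ _.
Arguments peta {C I} _ _.
Arguments pmu {C I} _ _ _ _.

Definition vcomp {D E : Category} {F G H : Functor D E}
  (t : NatTrans G H) (s : NatTrans F G) : NatTrans F H.
Proof.
  refine {| component := fun X => comp (t X) (s X) |}.
  by move=> a b f; rewrite comp_assoc naturality -comp_assoc naturality comp_assoc.
Defined.

Lemma NatTrans_ext {D E : Category} {F G : Functor D E} (s t : NatTrans F G) :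
  (forall a, s a = t a) -> s = t.
Proof.
  case: s t => [s ns] [t nt] /= est.
  have {}est : s = t := functional_extensionality_dep _ _ est.
  subst t; f_equal; exact: proof_irrelevance.
Qed.

Lemma tcast_const {C K : Category} (F : K -> K -> Functor C C) (a b : K)
  (h h' : hom a b) (e : h = h') (X : C) :
  tcast (fun a b _ => F a b) e X = idm (F a b X).
Proof. by case: h' / e. Qed.

Lemma Build_GradedMonad_inj {C K : Category} (T : forall a b : K, hom a b -> Functor C C)
  eta1 mu1 ul1 ur1 as1 eta2 mu2 ul2 ur2 as2 :
  Build_GradedMonad C K T eta1 mu1 ul1 ur1 as1
  = Build_GradedMonad C K T eta2 mu2 ul2 ur2 as2 -> eta1 = eta2 /\ mu1 = mu2.
Proof.
  move=> E; injection E as Eeta Emu.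
  exact: conj (inj_pair2 _ _ _ _ _ Eeta) (inj_pair2 _ _ _ _ _ Emu).
Qed.

Section AdjoinZero.
Variable I : Category.

Definition comp_opt {a b c : I} (g : option (hom b c)) (f : option (hom a b)) :
  option (hom a c) :=
  match g, f with Some g, Some f => Some (comp g f) | _, _ => None end.

(* The zero morphism [None] makes every hom-set inhabited, so that a grade
   a -> b exists, and can carry P(a,b), even when I has no morphism a -> b. *)
Definition adjoin_zero : Category.
Proof.
  refine {| ob := ob I; hom := fun a b => option (hom a b);
            idm := fun a => Some (idm a); comp := @comp_opt |}.
  - by move=> a b [f|] //=; rewrite comp_id_l.
  - by move=> a b [f|] //=; rewrite comp_id_r.
  - by move=> a b c d [f|] [g|] [h|] //=; rewrite comp_assoc.
Defined.

Definition nonzero_morphisms : WideSubcat adjoin_zero.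
Proof.
  refine {| inS := fun a b (h : @hom adjoin_zero a b) => h <> None |}.
  - by [].
  - by move=> a b c [f|] [g|].
Defined.

Lemma nonzero_Some {a b : I} (f : hom a b) : @inS _ nonzero_morphisms a b (Some f).
Proof. by []. Qed.

End AdjoinZero.

Section ParamMonadUnits.
Context {C I : Category} (P : ParamMonad C I).

Definition punit {a b : I} (f : hom a b) : NatTrans (Fid C) (PF P a b) :=
  vcomp (Pmap P (idm a) f) (peta P a).

Lemma punit_id (a : I) (X : C) : punit (idm a) X = peta P a X.
Proof. by rewrite /= Pmap_id comp_id_l. Qed.

Lemma pmu_punit_l (a b c : I) (f : hom a b) (X : C) :
  comp (pmu P a b c X) (punit f (PF P b c X)) = Pmap P f (idm c) X.
Proof.
  rewrite /= comp_assoc pmu_dinat -comp_assoc (naturality _ _ (peta P a)) /=.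
  by rewrite comp_assoc pmu_unit_l comp_id_l.
Qed.

Lemma pmu_fmap_punit (a b c : I) (g : hom b c) (X : C) :
  comp (pmu P a b c X) (fmap (PF P a b) (punit g X)) = Pmap P (idm a) g X.
Proof.
  rewrite /= peta_dinat fmap_comp comp_assoc -pmu_dinat -comp_assoc.
  rewrite -(naturality _ _ (Pmap P (idm a) g)).
  by rewrite comp_assoc pmu_unit_r comp_id_l.
Qed.

Lemma punit_comp (a b c : I) (f : hom a b) (g : hom b c) (X : C) :
  comp (pmu P a b c X) (comp (fmap (PF P a b) (punit g X)) (punit f X))
  = punit (comp g f) X.
Proof. by rewrite comp_assoc pmu_fmap_punit /= comp_assoc -Pmap_comp comp_id_l. Qed.

Lemma Pmap_split (A A' B B' : I) (f : hom A' A) (g : hom B B') (X : C) :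
  Pmap P f g X = comp (Pmap P (idm A') g X) (Pmap P f (idm B) X).
Proof. by rewrite -Pmap_comp !comp_id_r. Qed.

Lemma Pmap_from_punit (A A' B B' : I) (f : hom A' A) (g : hom B B') (X : C) :
  Pmap P f g X =
  comp (comp (pmu P A' B B' X) (fmap (PF P A' B) (punit g X)))
       (comp (pmu P A' A B X) (punit f (PF P A B X))).
Proof. rewrite pmu_fmap_punit pmu_punit_l; exact: Pmap_split. Qed.

End ParamMonadUnits.

Section GradedOfParam.
Context {C I : Category} (P : ParamMonad C I).

Definition graded_of_param : GradedMonad C (adjoin_zero I).
Proof.
  refine {| T := fun a b (_ : @hom (adjoin_zero I) a b) => PF P a b;
            geta := peta P;
            gmu := fun a b c _ _ => pmu P a b c |}.
  - by move=> a b f X; rewrite tcast_const pmu_unit_l.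
  - by move=> a b f X; rewrite tcast_const pmu_unit_r.
  - by move=> a b c d f g h X; rewrite tcast_const comp_id_l pmu_assoc.
Defined.

Definition punit_opt {a b : I} (h : @hom (adjoin_zero I) a b) :
  inS (nonzero_morphisms I) h -> NatTrans (Fid C) (PF P a b) :=
  match h return inS (nonzero_morphisms I) h -> _ with
  | Some f => fun _ => punit P f
  | None => fun nz => False_rect _ (nz eq_refl)
  end.

Definition genunit_of_param : GenUnit graded_of_param (nonzero_morphisms I).
Proof.
  refine (@Build_GenUnit _ _ graded_of_param _ (@punit_opt) _ _).
  - by move=> a b c [f|] [g|] //= hf hg X; rewrite punit_comp.
  - by move=> a X; exact: punit_id.
Defined.

Definition graded_with_unit_of_param :
  { M : GradedMonad C (adjoin_zero I) & GenUnit M (nonzero_morphisms I) } :=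
  existT _ graded_of_param genunit_of_param.

End GradedOfParam.

Lemma graded_with_unit_of_param_inj (C I : Category) (P Q : ParamMonad C I) :
  graded_with_unit_of_param P = graded_with_unit_of_param Q -> P = Q.
Proof.
  move=> E.
  have EM := f_equal (@projT1 _ _) E.
  have EF : PF P = PF Q :=
    f_equal (fun (M : GradedMonad C (adjoin_zero I)) a b => @T _ _ M a b None) EM.
  have RP := Pmap_from_punit P; have RQ := Pmap_from_punit Q.
  case: P Q EF E EM RP RQ => F Pm Pm_id Pm_comp eta mu ul ur as_ ed nl nr md
                            [F' Pm' Pm_id' Pm_comp' eta' mu' ul' ur' as' ed' nl' nr' md'] /=.
  move=> EF; subst F' => E /Build_GradedMonad_inj [/= Eeta Emu] RP RQ.
  have {}Emu : mu = mu' := f_equal (fun m a b c => m a b c None None) Emu.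
  subst eta' mu'.
  rewrite (proof_irrelevance _ ul' ul) (proof_irrelevance _ ur' ur)
          (proof_irrelevance _ as' as_) in E.
  have {}E := inj_pair2 _ _ _ _ _ E.
  have Epunit (a b : I) (f : hom a b) (X : C) :
    comp (Pm a a a b (idm a) f X) (eta a X) = comp (Pm' a a a b (idm a) f X) (eta a X)
    := f_equal (fun U => @ebar C (adjoin_zero I) _ _ U a b (Some f) (nonzero_Some _ f) X) E.
  have EPm : Pm = Pm'.
  { do 6 apply: functional_extensionality_dep => ?.
    by apply: NatTrans_ext => X; rewrite RP RQ !Epunit. }
  subst Pm'; f_equal; exact: proof_irrelevance.
Qed.

Theorem proposition36 (C I : Category) :
  exists (K : Category) (S : WideSubcat K)
         (F : ParamMonad C I -> { M : GradedMonad C K & GenUnit M S }),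
    forall P Q : ParamMonad C I, F P = F Q -> P = Q.
Proof.
  exists (adjoin_zero I), (nonzero_morphisms I), graded_with_unit_of_param.
  exact: graded_with_unit_of_param_inj.
Qed.
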